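(* Let $n\ge2$. Then $\Gamma^k=\Gamma^{n-k}$ for all $k=1,\dots,n-1$.
   Context: Let $\mathrm{C}$ be either the real Clifford algebra $C\ell_{p,q}$ with $p+q=n$, or the complex Clifford algebra $C\ell(\mathbb{C}^n)$. It has identity $e$ and generators $e_1,\dots,e_n$ satisfying $e_ae_b+e_be_a=2\eta_{ab}e$. In the real case $\eta=\mathrm{diag}(1,\dots,1,-1,\dots,-1)$ with $p$ entries $+1$ and $q$ entries $-1$. In the complex case $\eta=I_n$. $\mathrm{C}^k$ is the grade-$k$ subspace, spanned by the products $e_{a_1}\cdots e_{a_k}$ with $a_1<\dots<a_k$. $\mathrm{C}^\times$ is the group of invertible elements. $\Gamma^k=\{T\in\mathrm{C}^\times: T\,\mathrm{C}^k\,T^{-1}\subseteq\mathrm{C}^k\}$. *)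

From mathcomp Require Import all_boot all_algebra.
From mathcomp Require Import reals.
From mathcomp.real_closed Require Import complex.
Set Implicit Arguments. Unset Strict Implicit. Unset Printing Implicit Defensive.
Import GRing.Theory Num.Theory.
Local Open Scope ring_scope.

(* Concrete model of the Clifford algebra generated by e_0,...,e_{n-1}
   (0-indexed) with e_a e_b + e_b e_a = 2 eta_a delta_ab e, over a field F.
   An element is its coordinate vector in the blade basis
   e_A = e_{a1} ... e_{ak}  (A = {a1 < ... < ak}), e_{empty} = e. *)
Definition cl (F : fieldType) (n : nat) := {ffun {set 'I_n} -> F}.

Section Clifford.
Variables (F : fieldType) (n : nat) (eta : 'I_n -> F).

(* e_A e_B = bsign A B e_{A symmetric-difference B} *)
Definition bsign (A B : {set 'I_n}) : F :=
  (-1) ^+ #|[set ab : 'I_n * 'I_n | [&& ab.1 \in A, ab.2 \in B & (ab.2 < ab.1)%N]]|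
  * \prod_(i in A :&: B) eta i.

Definition symdiff (A B : {set 'I_n}) : {set 'I_n} := (A :\: B) :|: (B :\: A).

Definition clone : cl F n := [ffun A => if A == set0 then 1 else 0].

Definition clmul (X Y : cl F n) : cl F n :=
  [ffun C => \sum_(A : {set 'I_n}) \sum_(B : {set 'I_n})
      (if symdiff A B == C then X A * Y B * bsign A B else 0)].

Definition grade (k : nat) (X : cl F n) : Prop :=
  forall A : {set 'I_n}, #|A| != k -> X A = 0.

Definition clinverse (T S : cl F n) : Prop :=
  clmul T S = clone /\ clmul S T = clone.

Definition Gamma (k : nat) (T : cl F n) : Prop :=
  exists S, clinverse T S /\ forall X, grade k X -> grade k (clmul (clmul T X) S).
End Clifford.

Definition eta_pq (R : realType) (p q : nat) (i : 'I_(p + q)) : R :=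
  if (i < p)%N then 1 else -1.

Definition eta_C (R : realType) (n : nat) (i : 'I_n) : R[i] := 1.

From mathcomp Require Import all_boot all_algebra.
From mathcomp Require Import reals.
From mathcomp.real_closed Require Import complex.
From mathcomp Require Import ring zify.
Set Implicit Arguments. Unset Strict Implicit. Unset Printing Implicit Defensive.
Import GRing.Theory Num.Theory.
Local Open Scope ring_scope.

(* We work in the blade model [cl F n] over any field F of characteristic
   not 2, with a metric eta satisfying eta_i^2 = 1 (this covers C(p,q) and
   the complex Clifford algebra).  Let I = e_{1..n} be the pseudoscalar and
   tau the twist X_A |-> (-1)^((n+1)|A|) X_A, so that I Z = tau(Z) I.
   1. The blade product is associative with unit e (a cocycle identity for
      the blade signs), and tau is an algebra automorphism.
   2. An element commuting with all of C^k, 1 <= k <= n-1, lies in the span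
      of e and I: every other blade anticommutes with some k-blade.
   3. Key lemma: if T in Gamma^k has inverse S, then W = S tau(T) commutes
      with C^k and W^2 = e; the I-component of W must vanish, so tau(T) is
      a multiple of T, and hence tau(S) = c S for some scalar c.
   4. Right multiplication by I is a bijection C^k -> C^(n-k), and
      T (X I) S = T X tau(S) I = c (T X S) I, which gives
      Gamma^k <= Gamma^(n-k); by symmetry in k the two groups agree. *)

Lemma exists_subset (T : finType) (U : {set T}) m :
  (m <= #|U|)%N -> exists V : {set T}, V \subset U /\ #|V| = m.
Proof.
elim: m => [|m IH] H; first by exists set0; rewrite sub0set cards0.
have [V [HV Hc]] := IH (ltnW H).
have : V \proper U by rewrite properEcard HV Hc.
case/properP => _ [x Hx HxV].
exists (x |: V); rewrite cardsU1 HxV Hc add1n; split => //.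
by rewrite subUset sub1set Hx HV.
Qed.

Definition sgnb (F : fieldType) (b : bool) : F := if b then -1 else 1.

Lemma sign_card (F : fieldType) (T : finType) (A : {set T}) :
  (-1) ^+ #|A| = \prod_i sgnb F (i \in A).
Proof. by rewrite -prodr_const big_mkcond. Qed.

Lemma sgnbM (F : fieldType) a b : sgnb F (a (+) b) = sgnb F a * sgnb F b.
Proof. by case: a; case: b; rewrite /sgnb /= ?mulrNN ?mulr1 ?mul1r. Qed.

Lemma sgnb2 (F : fieldType) a : sgnb F a * sgnb F a = 1.
Proof. by case: a; rewrite /sgnb ?mulrNN mulr1. Qed.

Lemma sign_sqr (F : fieldType) (k : nat) : (-1) ^+ k * (-1) ^+ k = 1 :> F.
Proof. by rewrite -exprD addnn -mul2n exprM sqrrN !expr1n. Qed.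

Section CliffordAlgebra.
Variables (F : fieldType) (n : nat) (eta : 'I_n -> F).
Hypothesis eta_sq : forall i, eta i * eta i = 1.
Hypothesis two_neq0 : (2%:R : F) != 0.

Local Notation mul := (clmul eta).
Local Notation bs := (bsign eta).
Local Notation sd := (@symdiff n).

Lemma in_symdiff (A B : {set 'I_n}) x : (x \in sd A B) = (x \in A) (+) (x \in B).
Proof. by rewrite /symdiff !inE; case: (x \in A); case: (x \in B). Qed.

Lemma symdiffC A B : sd A B = sd B A.
Proof. by apply/setP => x; rewrite !in_symdiff addbC. Qed.

Lemma symdiffA A B C : sd A (sd B C) = sd (sd A B) C.
Proof. by apply/setP => x; rewrite !in_symdiff addbA. Qed.

Lemma symdiffK A B : sd A (sd A B) = B.
Proof. by apply/setP => x; rewrite !in_symdiff addKb. Qed.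

Lemma symdiffKr A B : sd (sd A B) B = A.
Proof. by apply/setP => x; rewrite !in_symdiff addbK. Qed.

Lemma symdiff0 A : sd set0 A = A.
Proof. by apply/setP => x; rewrite !in_symdiff inE. Qed.

Lemma symdiffxx A : sd A A = set0.
Proof. by apply/setP => x; rewrite in_symdiff addbb inE. Qed.

Lemma symdiffT A : sd setT A = ~: A.
Proof. by apply/setP => x; rewrite !in_symdiff !inE. Qed.

Lemma symdiff_inj A : injective (sd A).
Proof. by move=> B C H; rewrite -(symdiffK A B) H symdiffK. Qed.

Lemma sign_symdiff A B : (-1) ^+ #|sd A B| = (-1) ^+ #|A| * (-1) ^+ #|B| :> F.
Proof.
by rewrite !sign_card -big_split; apply: eq_bigr => i _; rewrite in_symdiff sgnbM.
Qed.

(* The blade sign factors into a product of pairwise reordering signs and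
   a product of metric factors; both factors are cocycles. *)
Definition metric_part (A B : {set 'I_n}) : F :=
  \prod_i (if (i \in A) && (i \in B) then eta i else 1).
Definition order_part (A B : {set 'I_n}) : F :=
  \prod_(p : 'I_n * 'I_n) sgnb F [&& p.1 \in A, p.2 \in B & (p.2 < p.1)%N].

Lemma bsignE A B : bs A B = order_part A B * metric_part A B.
Proof.
rewrite /bsign sign_card /order_part /metric_part; congr (_ * _).
  by apply: eq_bigr => p _; rewrite inE.
by rewrite big_mkcond; apply: eq_bigr => i _; rewrite inE.
Qed.

Lemma bsign_cocycle A B C : bs A B * bs (sd A B) C = bs B C * bs A (sd B C).
Proof.
rewrite !bsignE.
have HP : order_part A B * order_part (sd A B) C
          = order_part B C * order_part A (sd B C).
  rewrite /order_part -!big_split; apply: eq_bigr => p _ /=; rewrite !in_symdiff.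
  case: (p.1 \in A); case: (p.1 \in B); case: (p.2 \in B); case: (p.2 \in C);
  case: (p.2 < p.1)%N; by rewrite /sgnb /= ?mulrNN ?mulr1 ?mul1r.
have HE : metric_part A B * metric_part (sd A B) C
          = metric_part B C * metric_part A (sd B C).
  rewrite /metric_part -!big_split; apply: eq_bigr => i _ /=; rewrite !in_symdiff.
  by case: (i \in A); case: (i \in B); case: (i \in C); rewrite /= ?mulr1 ?mul1r.
by rewrite mulrACA HP HE mulrACA.
Qed.

Lemma bsign0l A : bs set0 A = 1.
Proof. by rewrite bsignE /order_part /metric_part !big1 ?mulr1 // => [i|p] _; rewrite inE. Qed.

Lemma bsign0r A : bs A set0 = 1.
Proof.
by rewrite bsignE /order_part /metric_part !big1 ?mulr1 // => [i|p] _; rewrite inE ?andbF.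
Qed.

Lemma bsign_sqr A B : bs A B * bs A B = 1.
Proof.
rewrite bsignE mulrACA /order_part /metric_part -!big_split !big1 ?mulr1 // => [i|p] _ /=.
  by case: ifP; rewrite ?mulr1 ?eta_sq.
exact: sgnb2.
Qed.

Lemma bsign_swap A B : bs A B * bs B A = (-1) ^+ (#|A| * #|B| + #|A :&: B|).
Proof.
rewrite !bsignE mulrACA.
have -> : metric_part B A = metric_part A B.
  by apply: eq_bigr => i _; rewrite andbC.
have -> : metric_part A B * metric_part A B = 1.
  rewrite /metric_part -big_split big1 // => i _ /=.
  by case: ifP; rewrite ?mulr1 ?eta_sq.
rewrite mulr1 exprD -cardsX !sign_card.
have -> : \prod_i sgnb F (i \in A :&: B) =
          \prod_(p : 'I_n * 'I_n) sgnb F ((p.1 == p.2) && (p.1 \in A :&: B)).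
  rewrite -(pair_bigA _ (fun i j => sgnb F ((i == j) && (i \in A :&: B)))) /=.
  apply: eq_bigr => i _; rewrite (bigD1 i) //= eqxx big1 ?mulr1 // => j Hj.
  by rewrite eq_sym (negbTE Hj).
pose swap (p : 'I_n * 'I_n) := (p.2, p.1).
have swap_inj : injective swap by move=> [a b] [c d] [-> ->].
rewrite /order_part [X in _ * X](reindex_inj swap_inj) -!big_split.
apply: eq_bigr => -[x y] _; rewrite /= !inE.
case: (ltngtP x y) => [xy|yx|/val_inj ->]; last by rewrite eqxx /= !andbF !sgnb2.
- have -> : (x == y) = false by apply/eqP => E; rewrite E ltnn in xy.
  by case: (x \in A); case: (y \in B); rewrite /sgnb /= ?andbF ?mulr1 ?mul1r.
- have -> : (x == y) = false by apply/eqP => E; rewrite E ltnn in yx.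
  by case: (x \in A); case: (y \in B); rewrite /sgnb /= ?andbF ?mulr1 ?mul1r.
Qed.

Lemma bsign_odd_noncomm (A B : {set 'I_n}) :
  odd (#|A| * #|B| + #|A :&: B|) -> bs A B != bs B A.
Proof.
move=> Ho; apply/eqP => E; have := bsign_swap A B; rewrite -E bsign_sqr.
rewrite -signr_odd Ho expr1 => H.
by move: two_neq0; rewrite mulr2n {2}H subrr eqxx.
Qed.

Lemma clmulE X Y D : mul X Y D = \sum_A X A * Y (sd A D) * bs A (sd A D).
Proof.
rewrite ffunE; apply: eq_bigr => A _.
rewrite (bigD1 (sd A D)) //= symdiffK eqxx big1 ?addr0 // => B HB.
by case: eqP => // HD; move: HB; rewrite -HD symdiffK eqxx.
Qed.

Lemma clmulA X Y Z : mul (mul X Y) Z = mul X (mul Y Z).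
Proof.
apply/ffunP => D; rewrite !clmulE.
under eq_bigr => C _ do rewrite clmulE.
under eq_bigr => C _ do rewrite big_distrl.
under eq_bigr => C _ do rewrite big_distrl.
rewrite exchange_big /=; apply: eq_bigr => A _.
rewrite (reindex_inj (@symdiff_inj A)) /= clmulE big_distrr /= big_distrl /=.
apply: eq_bigr => B _; rewrite symdiffK.
have -> : sd (sd A B) D = sd B (sd A D) by rewrite [RHS]symdiffA (symdiffC B A).
have := bsign_cocycle A B (sd B (sd A D)); rewrite symdiffK => Hc.
transitivity (X A * Y B * Z (sd B (sd A D))
              * (bs A B * bs (sd A B) (sd B (sd A D)))); first by ring.
by rewrite Hc; ring.
Qed.

Definition blade (B : {set 'I_n}) : cl F n := [ffun C => (C == B)%:R].
Definition clscale (c : F) (X : cl F n) : cl F n := [ffun D => c * X D].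
Local Notation sc := clscale.
Local Notation I := (blade setT).

Lemma mul_blade_r Y B D : mul Y (blade B) D = Y (sd B D) * bs (sd B D) B.
Proof.
rewrite clmulE (bigD1 (sd B D)) //= big1 ?addr0; first by rewrite ffunE symdiffKr eqxx mulr1.
move=> A HA; rewrite ffunE; case: eqP; rewrite ?mulr0 ?mul0r // => HD.
by move: HA; rewrite -HD symdiffKr eqxx.
Qed.

Lemma mul_blade_l Y B D : mul (blade B) Y D = Y (sd B D) * bs B (sd B D).
Proof.
rewrite clmulE (bigD1 B) //= big1 ?addr0; first by rewrite ffunE eqxx mul1r.
by move=> A HA; rewrite ffunE (negbTE HA) !mul0r.
Qed.

Lemma clone_blade : clone F n = blade set0.
Proof. by apply/ffunP => A; rewrite !ffunE; case: eqP. Qed.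

Lemma mul1cl X : mul (clone F n) X = X.
Proof. by apply/ffunP => D; rewrite clone_blade mul_blade_l symdiff0 bsign0l mulr1. Qed.

Lemma mulcl1 X : mul X (clone F n) = X.
Proof. by apply/ffunP => D; rewrite clone_blade mul_blade_r symdiff0 bsign0r mulr1. Qed.

Lemma mulscl c X Y : mul (sc c X) Y = sc c (mul X Y).
Proof.
apply/ffunP => D; rewrite clmulE [in RHS]ffunE clmulE big_distrr.
by apply: eq_bigr => A _; rewrite ffunE /=; ring.
Qed.

Lemma mulscr c X Y : mul X (sc c Y) = sc c (mul X Y).
Proof.
apply/ffunP => D; rewrite clmulE [in RHS]ffunE clmulE big_distrr.
by apply: eq_bigr => A _; rewrite ffunE /=; ring.
Qed.

Lemma clscaleA a b X : sc a (sc b X) = sc (a * b) X.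
Proof. by apply/ffunP => D; rewrite !ffunE mulrA. Qed.

Lemma clscale1 X : sc 1 X = X.
Proof. by apply/ffunP => D; rewrite !ffunE mul1r. Qed.

Lemma grade_clscale k c X : grade k X -> grade k (sc c X).
Proof. by move=> H A HA; rewrite ffunE H // mulr0. Qed.

Lemma grade_blade (B : {set 'I_n}) : grade #|B| (blade B).
Proof. by move=> A HA; rewrite ffunE; case: eqP => // E; rewrite E eqxx in HA. Qed.

Definition twist (m : nat) (X : cl F n) : cl F n :=
  [ffun A : {set 'I_n} => (-1) ^+ (m * #|A|) * X A].

Lemma twist_mul m X Y : twist m (mul X Y) = mul (twist m X) (twist m Y).
Proof.
apply/ffunP => D; rewrite clmulE [in LHS]ffunE clmulE big_distrr.
apply: eq_bigr => A _; rewrite !ffunE /=.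
have -> : (-1) ^+ (m * #|D|) = (-1) ^+ (m * #|D|) * ((-1) ^+ (m * #|A|)
          * (-1) ^+ (m * #|A|)) :> F by rewrite sign_sqr mulr1.
rewrite !(mulnC m) !exprM -[in RHS](symdiffK A D) sign_symdiff exprMn.
by rewrite symdiffK; ring.
Qed.

Lemma twist_one m : twist m (clone F n) = clone F n.
Proof.
apply/ffunP => A; rewrite !ffunE; case: eqP => [->|]; last by rewrite mulr0.
by rewrite cards0 muln0 expr0 mulr1.
Qed.

Lemma twistK m : involutive (twist m).
Proof. by move=> X; apply/ffunP => A; rewrite !ffunE mulrA sign_sqr mul1r. Qed.

Lemma twist_grade m k X : grade k X -> twist m X = sc ((-1) ^+ (m * k)) X.
Proof.
move=> H; apply/ffunP => A; rewrite !ffunE.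
by case: (eqVneq #|A| k) => [->//|HA]; rewrite H // !mulr0.
Qed.

Lemma pseudoscalar_mul_l Z : mul I Z = mul (twist n.+1 Z) I.
Proof.
apply/ffunP => D; rewrite mul_blade_l mul_blade_r ffunE.
set E := sd setT D.
have H := bsign_swap setT E; rewrite cardsT card_ord setTI in H.
have -> : bs setT E = (-1) ^+ (n.+1 * #|E|) * bs E setT.
  transitivity (bs setT E * (bs E setT * bs E setT)); first by rewrite bsign_sqr mulr1.
  by rewrite mulrA H mulSn addnC.
by ring.
Qed.

Lemma pseudoscalar_sqr : mul I I = sc (bs setT setT) (clone F n).
Proof.
apply/ffunP => D; rewrite mul_blade_r !ffunE.
case: (eqVneq D set0) => [->|HD]; first by rewrite symdiffC symdiff0 eqxx mul1r mulr1.
have -> : (sd setT D == setT) = false.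
  apply/eqP => E; have : sd setT D = sd setT set0 by rewrite E symdiffC symdiff0.
  by move/symdiff_inj => E2; rewrite E2 eqxx in HD.
by rewrite mul0r mulr0.
Qed.

Lemma grade_mul_pseudoscalar m Y :
  grade m Y -> (m <= n)%N -> grade (n - m) (mul Y I).
Proof.
move=> H hm D HD; rewrite mul_blade_r H ?mul0r // symdiffT cardsCs setCK card_ord.
have hD : (#|D| <= n)%N by have := max_card D; rewrite card_ord.
by apply/eqP => E; move/eqP: HD; lia.
Qed.

Definition scalar_pseudoscalar (W : cl F n) : Prop :=
  forall D : {set 'I_n}, D != set0 -> D != setT -> W D = 0.

(* Every blade other than e and I anticommutes with some k-blade,
   1 <= k <= n-1: add to k-1 indices outside {a, c} (a in D, c not in D)
   either a or c, one of which makes the commutation exponent odd. *)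
Lemma exists_anticommuting_blade k (D : {set 'I_n}) :
  (1 <= k)%N -> (k <= n.-1)%N -> D != set0 -> D != setT ->
  exists B : {set 'I_n}, #|B| = k /\ odd (#|D| * #|B| + #|D :&: B|).
Proof.
move=> k1 kn /set0Pn [a Ha] HDT.
have [c Hc] : exists c, c \notin D.
  case: (pickP (fun c => c \notin D)) => [c Hc|Hn]; first by exists c.
  by move: HDT; case/eqP; apply/setP => x; rewrite inE; move/negbFE: (Hn x).
have ac : a != c by apply/eqP => E; move: Hc; rewrite -E Ha.
have Hcard : #|~: [set a; c]| = (n - 2)%N by rewrite cardsCs setCK cards2 ac card_ord.
have [V [HV HVc]] := @exists_subset _ (~: [set a; c]) k.-1 ltac:(rewrite Hcard; lia).
have aV : a \notin V by apply/negP => /(subsetP HV); rewrite !inE eqxx.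
have cV : c \notin V by apply/negP => /(subsetP HV); rewrite !inE eqxx orbT.
have Ek : (1 + k.-1 = k)%N by lia.
case Ho: (odd (#|D| * k + #|D :&: V|)).
  exists (c |: V); have -> : D :&: (c |: V) = D :&: V.
    by apply/setP => x; rewrite !inE; case: (eqVneq x c) => [->|] //=; rewrite (negbTE Hc).
  by rewrite cardsU1 cV HVc Ek.
exists (a |: V); have -> : D :&: (a |: V) = a |: (D :&: V).
  by apply/setP => x; rewrite !inE; case: (eqVneq x a) => [->|] //=; rewrite Ha.
have aDV : a \notin D :&: V by rewrite inE (negbTE aV) andbF.
rewrite cardsU1 aV HVc cardsU1 aDV Ek.
by split => //; rewrite add1n addnS /= Ho.
Qed.

Lemma centralizer_grade k W : (1 <= k)%N -> (k <= n.-1)%N ->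
  (forall X, grade k X -> mul W X = mul X W) -> scalar_pseudoscalar W.
Proof.
move=> k1 kn Hcomm D HD0 HDT.
have [B [HB Ho]] := exists_anticommuting_blade k1 kn HD0 HDT; subst k.
have := congr1 (fun Z : cl F n => Z (sd B D)) (Hcomm _ (@grade_blade B)).
rewrite /= mul_blade_r mul_blade_l !symdiffK => E.
apply/eqP; apply: contraTT (bsign_odd_noncomm Ho) => HW.
by apply/negPn/eqP; apply: (mulfI HW).
Qed.

Lemma twist_scalar_pseudoscalar W : scalar_pseudoscalar W -> twist n.+1 W = W.
Proof.
move=> HW; apply/ffunP => D; rewrite ffunE.
case: (eqVneq D set0) => [->|H0]; first by rewrite cards0 muln0 expr0 mul1r.
case: (eqVneq D setT) => [->|HT]; last by rewrite HW // mulr0.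
by rewrite cardsT card_ord -signr_odd oddM /= andNb expr0 mul1r.
Qed.

Lemma scalar_pseudoscalar_scalar W :
  scalar_pseudoscalar W -> W setT = 0 -> W = sc (W set0) (clone F n).
Proof.
move=> HW HT; apply/ffunP => D; rewrite !ffunE.
case: (eqVneq D set0) => [->|H0]; first by rewrite mulr1.
by case: (eqVneq D setT) => [->|HDT]; rewrite mulr0; [exact: HT | exact: HW].
Qed.

(* A square root W of e that intertwines an invertible U with tau(U)
   (U W = tau(U)) has no I-component: otherwise W = b I, and then
   I U = tau(U) I = b U I^2 is a scalar multiple of U, making I a scalar. *)
Lemma pseudoscalar_coord_zero U S W : (0 < n)%N ->
  mul U S = clone F n -> scalar_pseudoscalar W -> mul W W = clone F n ->
  mul U W = twist n.+1 U -> W setT = 0.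
Proof.
move=> n0 US HW WW UW.
have Tne0 : (setT : {set 'I_n}) != set0.
  by apply/set0Pn; exists (Ordinal n0); rewrite inE.
apply/eqP/negP => /negP Hb.
have W0 : W set0 = 0.
  have := congr1 (fun Z : cl F n => Z setT) WW.
  rewrite /= clmulE ffunE (negbTE Tne0) (bigD1 set0) //= (bigD1 setT) //= big1; last first.
    by move=> A /andP [HA0 HAT]; rewrite HW // !mul0r.
  rewrite symdiff0 symdiffxx bsign0l bsign0r addr0 !mulr1 (mulrC (W setT)) -mulr2n.
  by move/eqP; rewrite -mulr_natr !mulf_eq0 (negbTE two_neq0) (negbTE Hb) !orbF => /eqP.
have EW : W = sc (W setT) I.
  apply/ffunP => D; rewrite !ffunE.
  case: (eqVneq D setT) => [->|HT]; first by rewrite mulr1.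
  rewrite /= mulr0; case: (eqVneq D set0) => [->|H0]; first exact: W0.
  exact: HW.
set b := W setT in EW.
have IU : mul I U = sc (b * bs setT setT) U.
  by rewrite pseudoscalar_mul_l -UW EW mulscr mulscl clmulA pseudoscalar_sqr
             mulscr mulcl1 clscaleA.
have := congr1 (fun Z : cl F n => mul Z S) IU.
rewrite /= clmulA US mulcl1 mulscl US => /(congr1 (fun Z : cl F n => Z setT)) /=.
by rewrite !ffunE eqxx (negbTE Tne0) mulr0 => /eqP; rewrite oner_eq0.
Qed.

(* Conjugation by an element preserving C^k commutes with any twist:
   both sides of the conclusion are twists of the same grade-k element. *)
Lemma twist_conj_grade m k U S X : grade k X -> grade k (mul (mul U X) S) ->
  mul (mul (twist m U) X) (twist m S) = mul (mul U X) S.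
Proof.
move=> gX gY; have := twist_grade m gY.
rewrite !twist_mul (twist_grade m gX) mulscr mulscl.
move/(congr1 (sc ((-1) ^+ (m * k)))).
by rewrite !clscaleA sign_sqr !clscale1.
Qed.

(* W = S tau(U) commutes with C^k, so it lies in the
   span of e and I; it squares to e and has no I-component, hence
   tau(U) = a U, and then tau(S) = a^-1 S. *)
Lemma Gamma_inverse_twist k U S : (1 <= k)%N -> (k <= n.-1)%N ->
  clinverse eta U S -> (forall X, grade k X -> grade k (mul (mul U X) S)) ->
  exists c, twist n.+1 S = sc c S.
Proof.
move=> k1 kn [US SU] HG.
pose W := mul S (twist n.+1 U).
have Wcomm : forall X, grade k X -> mul W X = mul X W.
  move=> X gX; rewrite -[mul W X]mulcl1 -(twist_one n.+1) -SU twist_mul.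
  transitivity (mul S (mul (mul (mul (twist n.+1 U) X) (twist n.+1 S))
                           (twist n.+1 U))); first by rewrite /W !clmulA.
  by rewrite (twist_conj_grade _ gX (HG X gX)) -!clmulA SU mul1cl clmulA.
have Wsp := centralizer_grade k1 kn Wcomm.
have WW : mul W W = clone F n.
  rewrite -{1}(twist_scalar_pseudoscalar Wsp) /W twist_mul twistK.
  by rewrite !clmulA -(clmulA U S) US mul1cl -twist_mul SU twist_one.
have UW : mul U W = twist n.+1 U by rewrite /W -clmulA US mul1cl.
have n0 : (0 < n)%N by lia.
have EW := scalar_pseudoscalar_scalar Wsp (pseudoscalar_coord_zero n0 US Wsp WW UW).
set a := W set0 in EW.
have tU : twist n.+1 U = sc a U by rewrite -UW EW mulscr mulcl1.
have aS : sc a (twist n.+1 S) = S.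
  rewrite -[RHS]mulcl1 -(twist_one n.+1) -US twist_mul tU.
  by rewrite mulscl mulscr -clmulA SU mul1cl.
have a0 : a != 0.
  apply/eqP => a0; have := congr1 (fun Z : cl F n => Z set0) SU.
  by rewrite /= -aS a0 mulscl !ffunE eqxx mul0r => /eqP; rewrite eq_sym oner_eq0.
by exists a^-1; rewrite -[in RHS]aS clscaleA mulVf ?clscale1.
Qed.

(* Gamma^k <= Gamma^(n-k): write a grade-(n-k) element as X I with X of
   grade k, then U (X I) S = U X tau(S) I = c (U X S) I. *)
Lemma Gamma_dual k U : (1 <= k)%N -> (k <= n.-1)%N ->
  Gamma eta k U -> Gamma eta (n - k) U.
Proof.
move=> k1 kn [S [inv HG]]; exists S; split => // Y gY.
have [c tS] := Gamma_inverse_twist k1 kn inv HG.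
pose X := sc (bs setT setT) (mul Y I).
have gX : grade k X.
  apply: grade_clscale; have := grade_mul_pseudoscalar gY (leq_subr k n).
  by rewrite subKn //; lia.
have -> : Y = mul X I.
  by rewrite /X mulscl clmulA pseudoscalar_sqr mulscr mulcl1 clscaleA bsign_sqr clscale1.
have -> : mul (mul U (mul X I)) S = mul (sc c (mul (mul U X) S)) I.
  by rewrite !clmulA pseudoscalar_mul_l tS mulscl !mulscr -!clmulA mulscl.
apply: grade_mul_pseudoscalar; [exact: grade_clscale (HG X gX) | lia].
Qed.

End CliffordAlgebra.

Lemma Gamma_duality (F : fieldType) (n : nat) (eta : 'I_n -> F) :
  (forall i, eta i * eta i = 1) -> (2%:R : F) != 0 ->
  forall k, (1 <= k <= n.-1)%N -> forall T : cl F n,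
  Gamma eta k T <-> Gamma eta (n - k) T.
Proof.
move=> eta_sq two_neq0 k /andP [k1 kn] T; split; first exact: Gamma_dual.
have nk1 : (1 <= n - k)%N by lia.
have nkn : (n - k <= n.-1)%N by lia.
have kn' : (k <= n)%N by lia.
by move/(Gamma_dual eta_sq two_neq0 nk1 nkn); rewrite subKn.
Qed.

Theorem mainTheorem13 :
  (forall (R : realType) (p q : nat), (2 <= p + q)%N ->
     forall k : nat, (1 <= k <= (p + q).-1)%N ->
     forall T : cl R (p + q),
       Gamma (@eta_pq R p q) k T <-> Gamma (@eta_pq R p q) (p + q - k) T)
  /\
  (forall (R : realType) (n : nat), (2 <= n)%N ->
     forall k : nat, (1 <= k <= n.-1)%N ->
     forall T : cl (R[i]) n,
       Gamma (@eta_C R n) k T <-> Gamma (@eta_C R n) (n - k) T).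
Proof.
split.
- move=> R p q _; apply: Gamma_duality; last by rewrite pnatr_eq0.
  by move=> i; rewrite /eta_pq; case: ifP; rewrite ?mulr1 ?mulrNN ?mulr1.
- move=> R n _; apply: Gamma_duality; last by rewrite pnatr_eq0.
  by move=> i; rewrite /eta_C mulr1.
Qed.
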